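(* Let $(A,a),(B,b),(C,c),(D,d)$ be four flags in $\mathbb{RP}^2$ in generic position. Let $X$ be the triple ratio of $(A,a),(B,b),(C,c)$; let $Y$ be the triple ratio of $(A,a),(C,c),(D,d)$; let $Z$ be the cross-ratio of the four lines $a, AB, AC, AD$ through $A$ (in this order); and let $W$ be the cross-ratio of the four lines $c, CD, CA, CB$ through $C$ (in this order). Then the convex quadrangle $ABCD$ is inscribed into the convex quadrangle $abcd$ if and only if $X,Y,Z,W$ are all positive.
   Context: A flag in $\mathbb{RP}^2$ is a pair $(A,a)$ of a point $A$ and a line $a\ni A$. The triple ratio of flags $(A,a),(B,b),(C,c)$ is $\frac{f_a(\tilde B)f_b(\tilde C)f_c(\tilde A)}{f_a(\tilde C)f_b(\tilde A)f_c(\tilde B)}$, where $f_a,f_b,f_c\in(\mathbb R^3)^*$ have kernels the planes corresponding to $a,b,c$ and $\tilde A,\tilde B,\tilde C$ are nonzero lifts of $A,B,C$ to $\mathbb R^3$. The cross-ratio of four points $x_1,x_2,x_3,x_4$ on a projective line (or of four concurrent lines, viewed as points of the projective line of lines through their common point) is $\frac{(x_1-x_2)(x_3-x_4)}{(x_1-x_4)(x_2-x_3)}$ in any affine coordinate. ''The convex quadrangle $ABCD$ is inscribed into the convex quadrangle $abcd$'' means: in some affine chart $\mathbb R^2\subset\mathbb{RP}^2$, the lines $a,b,c,d$ bound a compact convex quadrilateral whose sides, in cyclic order, lie on $a,b,c,d$, and $A,B,C,D$ lie in the relative interiors of the sides on $a,b,c,d$ respectively (so $ABCD$ is a convex quadrilateral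 with vertices in this cyclic order). *)

(* Projective plane RP^2 over R : realType, in homogeneous
   coordinates: points and lines are nonzero vectors of R^3 (a line is given by
   a linear form f, written as its coefficient vector, with f(P) = dot f P). *)
From HB Require Import structures.
From mathcomp Require Import all_boot all_order all_algebra.
From mathcomp Require Import reals.
Set Implicit Arguments. Unset Strict Implicit. Unset Printing Implicit Defensive.
Import Order.TTheory GRing.Theory Num.Theory.
Local Open Scope ring_scope.

Section Defs.
Variable R : realType.

Definition vec3 := (R * R * R)%type.

Definition v3x (u : vec3) : R := u.1.1.
Definition v3y (u : vec3) : R := u.1.2.
Definition v3z (u : vec3) : R := u.2.

Definition v3zero : vec3 := (0, 0, 0).

Definition dot (f P : vec3) : R := v3x f * v3x P + v3y f * v3y P + v3z f * v3z P.

Definition cross (u v : vec3) : vec3 :=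
  (v3y u * v3z v - v3z u * v3y v,
   v3z u * v3x v - v3x u * v3z v,
   v3x u * v3y v - v3y u * v3x v).

Definition det3 (u v w : vec3) : R := dot (cross u v) w.

Definition v3add (u v : vec3) : vec3 := (v3x u + v3x v, v3y u + v3y v, v3z u + v3z v).
Definition v3scale (k : R) (u : vec3) : vec3 := (k * v3x u, k * v3y u, k * v3z u).

Definition is_flag (P f : vec3) : Prop := P <> v3zero /\ f <> v3zero /\ dot f P = 0.

Definition line_through (P Q : vec3) : vec3 := cross P Q.

Definition triple_ratio (A a B b C c : vec3) : R :=
  (dot a B * dot b C * dot c A) / (dot a C * dot b A * dot c B).

(* Cross-ratio (x1-x2)(x3-x4)/((x1-x4)(x2-x3)) of four lines f1..f4 through
   the point P, regarded as points of the projective line of lines through P.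
   In homogeneous coordinates on that projective line, x_j - x_i is the 2x2
   determinant of the lifts; here the area form on the 2-dimensional space of
   forms vanishing at P is (f, g) |-> det3 f g P. *)
Definition cross_ratio_pencil (P f1 f2 f3 f4 : vec3) : R :=
  (det3 f1 f2 P * det3 f3 f4 P) / (det3 f1 f4 P * det3 f2 f3 P).

Definition generic4 (A a B b C c D d : vec3) : Prop :=
  (det3 A B C <> 0 /\ det3 A B D <> 0 /\ det3 A C D <> 0 /\ det3 B C D <> 0) /\
  (det3 a b c <> 0 /\ det3 a b d <> 0 /\ det3 a c d <> 0 /\ det3 b c d <> 0) /\
  (dot a B <> 0 /\ dot a C <> 0 /\ dot a D <> 0 /\
   dot b A <> 0 /\ dot b C <> 0 /\ dot b D <> 0 /\
   dot c A <> 0 /\ dot c B <> 0 /\ dot c D <> 0 /\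
   dot d A <> 0 /\ dot d B <> 0 /\ dot d C <> 0).

Definition pt2 := (R * R)%type.

Definition orient2 (p q r : pt2) : R :=
  (q.1 - p.1) * (r.2 - p.2) - (q.2 - p.2) * (r.1 - p.1).

Definition in_open_segment (p q r : pt2) : Prop :=
  exists t : R, 0 < t /\ t < 1 /\ p = ((1 - t) * q.1 + t * r.1, (1 - t) * q.2 + t * r.2).

Definition convex_quad (p1 p2 p3 p4 : pt2) : Prop :=
  (0 < orient2 p1 p2 p3 /\ 0 < orient2 p1 p2 p4 /\
   0 < orient2 p2 p3 p4 /\ 0 < orient2 p2 p3 p1 /\
   0 < orient2 p3 p4 p1 /\ 0 < orient2 p3 p4 p2 /\
   0 < orient2 p4 p1 p2 /\ 0 < orient2 p4 p1 p3) \/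
  (orient2 p1 p2 p3 < 0 /\ orient2 p1 p2 p4 < 0 /\
   orient2 p2 p3 p4 < 0 /\ orient2 p2 p3 p1 < 0 /\
   orient2 p3 p4 p1 < 0 /\ orient2 p3 p4 p2 < 0 /\
   orient2 p4 p1 p2 < 0 /\ orient2 p4 p1 p3 < 0).

(* An affine chart R^2 -> RP^2 is given by a basis (o, e1, e2) of R^3:
   x |-> [o + x.1 e1 + x.2 e2]; its image is the complement of a line. *)
Definition chart (o e1 e2 : vec3) (x : pt2) : vec3 :=
  v3add o (v3add (v3scale x.1 e1) (v3scale x.2 e2)).

Definition chart_coord (o e1 e2 : vec3) (P : vec3) (x : pt2) : Prop :=
  exists k : R, k != 0 /\ P = v3scale k (chart o e1 e2 x).

Definition on_line_chart (o e1 e2 : vec3) (f : vec3) (x : pt2) : Prop :=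
  dot f (chart o e1 e2 x) = 0.

(* "The convex quadrangle ABCD is inscribed into the convex quadrangle abcd":
   in some affine chart, the lines a,b,c,d bound a compact convex
   quadrilateral whose sides, in cyclic order, lie on a,b,c,d (so its vertices
   are d∩a, a∩b, b∩c, c∩d), and A,B,C,D lie in the relative interiors of the
   sides on a,b,c,d respectively. *)
Definition inscribed (A a B b C c D d : vec3) : Prop :=
  exists o e1 e2 : vec3, det3 o e1 e2 <> 0 /\
  exists v1 v2 v3 v4 : pt2,
    [/\ on_line_chart o e1 e2 d v1 /\ on_line_chart o e1 e2 a v1,
        on_line_chart o e1 e2 a v2 /\ on_line_chart o e1 e2 b v2,
        on_line_chart o e1 e2 b v3 /\ on_line_chart o e1 e2 c v3,
        on_line_chart o e1 e2 c v4 /\ on_line_chart o e1 e2 d v4 &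
        convex_quad v1 v2 v3 v4] /\
  exists pA pB pC pD : pt2,
    [/\ chart_coord o e1 e2 A pA /\ in_open_segment pA v1 v2,
        chart_coord o e1 e2 B pB /\ in_open_segment pB v2 v3,
        chart_coord o e1 e2 C pC /\ in_open_segment pC v3 v4 &
        chart_coord o e1 e2 D pD /\ in_open_segment pD v4 v1].

End Defs.

From HB Require Import structures.
From mathcomp Require Import all_boot all_order all_algebra.
From mathcomp Require Import reals.
From mathcomp Require Import ring lra.
Import Order.TTheory GRing.Theory Num.Theory.
Set Implicit Arguments. Unset Strict Implicit. Unset Printing Implicit Defensive.
Local Open Scope ring_scope.

(* Four lines in general position are the sides of a quadrilateral whose vertices
   d∩a, a∩b, b∩c, c∩d lift to vectors V1, V2, V3, V4 = V1 - V2 + V3 of R^3, and each flag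
   point lifts to a multiple of V_i + y V_(i+1) on its side.  The configuration is inscribed
   exactly when the four parameters y are positive: the chart in which V1 V2 V3 V4 is the
   unit square places every point strictly inside its side, and conversely, in any chart
   where the quadrilateral is convex, consecutive vertices have lifts with scalars of the
   same sign, so a point of an open side has a positive parameter.  In this frame X, Y, Z, W
   are explicit rational functions of the parameters, and they are all positive precisely
   when the parameters are. *)

Section Signs.
Variable R : realFieldType.

Lemma gt0_of_mul_sqr (x y : R) : 0 < x * y ^+ 2 -> 0 < x.
Proof.
move=> h; case: (ltrP 0 x) => // hx.
have : x * y ^+ 2 <= 0 by apply: mulr_le0_ge0 => //; exact: sqr_ge0.
by rewrite leNgt h.
Qed.

Lemma divr_gt0E (x y : R) : (0 < x / y) = (0 < x * y).
Proof.
have [->|hy] := eqVneq y 0; first by rewrite invr0 !mulr0.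
have hy2 : 0 < y ^+ 2 by rewrite exprn_even_gt0 //= hy orbT.
by rewrite -(pmulr_lgt0 _ hy2) expr2 mulrA divfK.
Qed.

Lemma divr_common_factor (N M n m k : R) :
  N = k * n -> M = k * m -> k != 0 -> N / M = n / m.
Proof. by move=> -> -> hk; rewrite invfM mulrACA divff // mul1r. Qed.

Lemma quad_ratios_pos_iff (y1 y2 y3 y4 : R) :
  let P := 1 + y4 + y3 * y4 + y2 * y3 * y4 in
  let Q := 1 + y2 + y1 * y2 + y1 * y2 * y4 in
  [/\ 0 < y3 * y4 * (1 + y2) / (1 + y4), 0 < (1 + y4) * y1 * y2 / (1 + y2),
      0 < y3 * Q / P & 0 < y1 * P / Q] <->
  [/\ 0 < y1, 0 < y2, 0 < y3 & 0 < y4].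
Proof.
move=> P Q; split; last first.
  by move=> [h1 h2 h3 h4]; split; do ![apply: divr_gt0 | apply: mulr_gt0 | apply: addr_gt0].
rewrite !divr_gt0E => -[hX hY hZ hW].
set u := (1 + y2) * (1 + y4).
(* Y > 0 and X > 0 make Q, P have the signs of 1 + y2, 1 + y4. *)
have hQ : 0 < Q * (1 + y2).
  rewrite (_ : _ * _ = (1 + y2) ^+ 2 + (1 + y4) * y1 * y2 * (1 + y2)); last by rewrite /Q; ring.
  exact: ltr_wpDl (sqr_ge0 _) hY.
have hP : 0 < P * (1 + y4).
  rewrite (_ : _ * _ = (1 + y4) ^+ 2 + y3 * y4 * (1 + y2) * (1 + y4)); last by rewrite /P; ring.
  exact: ltr_wpDl (sqr_ge0 _) hX.
have h3u : 0 < y3 * u.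
  apply: (@gt0_of_mul_sqr _ (Q * P)).
  rewrite (_ : _ * _ = y3 * Q * P * (Q * (1 + y2) * (P * (1 + y4)))); last by rewrite /u; ring.
  exact: mulr_gt0 hZ (mulr_gt0 hQ hP).
have h1u : 0 < y1 * u.
  apply: (@gt0_of_mul_sqr _ (P * Q)).
  rewrite (_ : _ * _ = y1 * P * Q * (Q * (1 + y2) * (P * (1 + y4)))); last by rewrite /u; ring.
  exact: mulr_gt0 hW (mulr_gt0 hQ hP).
have hy4 : 0 < y4.
  rewrite -(pmulr_rgt0 _ h3u); suff -> : y3 * u * y4 = y3 * y4 * (1 + y2) * (1 + y4) by [].
  by rewrite /u; ring.
have hy2 : 0 < y2.
  rewrite -(pmulr_rgt0 _ h1u); suff -> : y1 * u * y2 = (1 + y4) * y1 * y2 * (1 + y2) by [].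
  by rewrite /u; ring.
have hu : 0 < u by rewrite /u mulr_gt0 ?addr_gt0.
by split; rewrite // -(pmulr_lgt0 _ hu).
Qed.

Lemma mulr_gt0_of_orient_pair (x x' t p q q' : R) : t != 0 -> 0 < x * x' ->
  x * t = p * q -> x' * t = p * q' -> 0 < q * q'.
Proof.
move=> ht hx e e'; apply: (@gt0_of_mul_sqr _ p).
have ht2 : 0 < t ^+ 2 by rewrite exprn_even_gt0 //= ht orbT.
rewrite (_ : _ * _ = (x * t) * (x' * t)); first by rewrite mulrACA -expr2 mulr_gt0.
by rewrite e e'; ring.
Qed.

Lemma segment_param_gt0 (t m m' y : R) : 0 < t -> t < 1 -> 0 < m * m' ->
  (1 - t) * m * y = t * m' -> 0 < y.
Proof.
move=> t0 t1 hm E.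
have hm' : m' != 0 by apply/eqP => h; move: hm; rewrite h mulr0 ltxx.
have hm'2 : 0 < m' ^+ 2 by rewrite exprn_even_gt0 //= hm' orbT.
have : 0 < (1 - t) * (m * m') * y.
  by rewrite (_ : _ * y = (1 - t) * m * y * m'); [rewrite E -mulrA mulr_gt0 | ring].
by rewrite pmulr_rgt0 // mulr_gt0 // subr_gt0.
Qed.

End Signs.

Definition parallelogram_vertex (R : realType) (V1 V2 V3 : vec3 R) : vec3 R :=
  v3add V1 (v3add (v3scale (-1) V2) V3).

Definition side_point (R : realType) (k : R) (U W : vec3 R) (y : R) : vec3 R :=
  v3scale k (v3add U (v3scale y W)).

Definition side_line (R : realType) (l : R) (U W : vec3 R) : vec3 R :=
  v3scale l (cross U W).

Lemma vec3_eq (R : realType) (u v : vec3 R) :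
  v3x u = v3x v -> v3y u = v3y v -> v3z u = v3z v -> u = v.
Proof. by case: u => [[? ?] ?]; case: v => [[? ?] ?]; rewrite /v3x /v3y /v3z /= => -> -> ->. Qed.

Ltac vec3_destruct := repeat match goal with
  | u : vec3 _ |- _ => destruct u as [[? ?] ?]
  | p : pt2 _ |- _ => destruct p as [? ?] end.
Ltac vec3_unfold := rewrite /parallelogram_vertex /side_point /side_line /chart /orient2
  /line_through /det3 /dot /cross /v3add /v3scale /v3zero /v3x /v3y /v3z /=.
Ltac vec3_ring := vec3_destruct; vec3_unfold; ring.
Ltac vec3_eq_ring := vec3_destruct; apply: vec3_eq; vec3_unfold; ring.

Section Vec3.
Variable R : realType.

Lemma det3_cycle (u v w : vec3 R) : det3 u v w = det3 v w u.
Proof. vec3_ring. Qed.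

Lemma det3_scale k1 k2 k3 (u v w : vec3 R) :
  det3 (v3scale k1 u) (v3scale k2 v) (v3scale k3 w) = k1 * k2 * k3 * det3 u v w.
Proof. vec3_ring. Qed.

Lemma v3scaleA k1 k2 (u : vec3 R) : v3scale k1 (v3scale k2 u) = v3scale (k1 * k2) u.
Proof. vec3_eq_ring. Qed.

Lemma cross_scale k1 k2 (u v : vec3 R) :
  cross (v3scale k1 u) (v3scale k2 v) = v3scale (k1 * k2) (cross u v).
Proof. vec3_eq_ring. Qed.

Lemma cross_cross (u v w : vec3 R) : cross (cross u v) (cross v w) = v3scale (det3 u v w) v.
Proof. vec3_eq_ring. Qed.

Lemma det3_cross (a b c d : vec3 R) :
  det3 (cross d a) (cross a b) (cross b c) = det3 d a b * det3 a b c.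
Proof. vec3_ring. Qed.

Lemma dot_side_line l (U W P : vec3 R) : dot (side_line l U W) P = l * det3 U W P.
Proof. vec3_ring. Qed.

Lemma dot_v3zero (f : vec3 R) : dot f (v3zero R) = 0.
Proof. vec3_ring. Qed.

Lemma dot_self_neq0 (P : vec3 R) : P <> v3zero R -> dot P P != 0.
Proof.
case: P => [[x y] z] hP; apply/eqP => h; apply: hP.
move: h; rewrite /dot /v3x /v3y /v3z /= => h.
have hx : x = 0 by nra.
have hy : y = 0 by nra.
have hz : z = 0 by nra.
by rewrite hx hy hz.
Qed.

Lemma det3_frame_next (V1 V2 V3 : vec3 R) (V4 := parallelogram_vertex V1 V2 V3) :
  [/\ det3 V2 V3 V4 = det3 V1 V2 V3, det3 V3 V4 V1 = det3 V1 V2 V3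
    & det3 V4 V1 V2 = det3 V1 V2 V3].
Proof. by rewrite /V4; split; vec3_ring. Qed.

Lemma det3_frame_prev (V1 V2 V3 : vec3 R) (V4 := parallelogram_vertex V1 V2 V3) :
  [/\ det3 V1 V2 V4 = det3 V1 V2 V3, det3 V2 V3 V1 = det3 V1 V2 V3,
      det3 V3 V4 V2 = det3 V1 V2 V3 & det3 V4 V1 V3 = det3 V1 V2 V3].
Proof. by rewrite /V4; split; vec3_ring. Qed.

Lemma parallelogram_vertex_cross (a b c d : vec3 R) :
  parallelogram_vertex (v3scale (det3 a b c * det3 b c d) (cross d a))
    (v3scale (det3 b c d * det3 c d a) (cross a b))
    (v3scale (det3 c d a * det3 d a b) (cross b c))
  = v3scale (det3 d a b * det3 a b c) (cross c d).
Proof. vec3_eq_ring. Qed.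

Lemma side_line_of_cross (f N1 N2 : vec3 R) (s m1 m2 : R) :
  s != 0 -> m1 != 0 -> m2 != 0 -> cross N1 N2 = v3scale s f ->
  f = side_line (m1 * m2 * s)^-1 (v3scale m1 N1) (v3scale m2 N2).
Proof.
move=> hs h1 h2 E; rewrite /side_line cross_scale E v3scaleA.
by vec3_destruct; apply: vec3_eq; vec3_unfold; field; rewrite hs h1 h2.
Qed.

Lemma det3_cramer (U W X P : vec3 R) :
  v3scale (det3 U W X) P =
  v3add (v3scale (det3 W X P) U) (v3add (v3scale (det3 X U P) W) (v3scale (det3 U W P) X)).
Proof. vec3_eq_ring. Qed.

Lemma side_point_of_det3 (U W X P : vec3 R) : det3 U W X != 0 ->
  det3 U W P = 0 -> det3 W X P != 0 -> exists k y, k != 0 /\ P = side_point k U W y.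
Proof.
move=> hD h0 hP; have := det3_cramer U W X P; rewrite h0.
move: (det3 U W X) (det3 W X P) (det3 X U P) hD hP => r p q hr hp E.
exists (p / r), (q / p); split; first by rewrite mulf_neq0 ?invr_neq0.
move: E; vec3_destruct; vec3_unfold; case=> E1 E2 E3; apply: vec3_eq; rewrite /v3x /v3y /v3z /=;
  apply: (mulfI hr); [rewrite E1 | rewrite E2 | rewrite E3]; field; exact/andP.
Qed.

Lemma det3_eq0_scale (U W X P : vec3 R) : det3 U W X != 0 ->
  det3 U W P = 0 -> det3 X U P = 0 -> exists m, P = v3scale m U.
Proof.
move=> hD h0 h0'; have := det3_cramer U W X P; rewrite h0 h0'.
move: (det3 U W X) (det3 W X P) hD => r p hr E.
exists (p / r); move: E; vec3_destruct; vec3_unfold; case=> E1 E2 E3; apply: vec3_eq;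
  rewrite /v3x /v3y /v3z /=; apply: (mulfI hr); [rewrite E1 | rewrite E2 | rewrite E3]; field; exact: hr.
Qed.

Lemma cross_ratio_pencil_lines (P f Q S T : vec3 R) : P <> v3zero R -> dot f P = 0 ->
  cross_ratio_pencil P f (line_through P Q) (line_through P S) (line_through P T)
  = dot f Q * det3 P S T / (dot f T * det3 P Q S).
Proof.
move=> hP hf; have hPP := dot_self_neq0 hP.
have det_f (g : vec3 R) : det3 f (line_through P g) P = dot f g * dot P P - dot f P * dot g P.
  by vec3_ring.
have det_lines (g h : vec3 R) :
  det3 (line_through P g) (line_through P h) P = det3 P g h * dot P P by vec3_ring.
rewrite /cross_ratio_pencil !det_f !det_lines hf.
by apply: (divr_common_factor (k := dot P P * dot P P)); [ring | ring | rewrite mulf_neq0].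
Qed.

Lemma chart_det o e1 e2 (p q r : pt2 R) :
  det3 (chart o e1 e2 p) (chart o e1 e2 q) (chart o e1 e2 r) = orient2 p q r * det3 o e1 e2.
Proof. vec3_ring. Qed.

Lemma chart_convex o e1 e2 (p q : pt2 R) t :
  chart o e1 e2 ((1 - t) * p.1 + t * q.1, (1 - t) * p.2 + t * q.2)
  = v3add (v3scale (1 - t) (chart o e1 e2 p)) (v3scale t (chart o e1 e2 q)).
Proof. vec3_eq_ring. Qed.

Lemma orient2_chart_scaled o e1 e2 (p q r : pt2 R) (U W X : vec3 R) m m' m'' :
  chart o e1 e2 p = v3scale m U -> chart o e1 e2 q = v3scale m' W ->
  chart o e1 e2 r = v3scale m'' X ->
  orient2 p q r * det3 o e1 e2 = m * m' * m'' * det3 U W X.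
Proof. by move=> ep eq er; rewrite -chart_det ep eq er det3_scale. Qed.

Lemma convex_quad_orient_pairs (p1 p2 p3 p4 : pt2 R) : convex_quad p1 p2 p3 p4 ->
  [/\ 0 < orient2 p1 p2 p3 * orient2 p1 p2 p4, 0 < orient2 p2 p3 p4 * orient2 p2 p3 p1,
      0 < orient2 p3 p4 p1 * orient2 p3 p4 p2 & 0 < orient2 p4 p1 p2 * orient2 p4 p1 p3].
Proof.
by case=> -[h1 [h2 [h3 [h4 [h5 [h6 [h7 h8]]]]]]]; split; by [apply: mulr_gt0 | rewrite nmulr_rgt0].
Qed.

Lemma chart_vertex_on_sides o e1 e2 (U W X : vec3 R) l l' (v : pt2 R) :
  det3 U W X != 0 -> l != 0 -> l' != 0 ->
  on_line_chart o e1 e2 (side_line l X U) v -> on_line_chart o e1 e2 (side_line l' U W) v ->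
  exists m, chart o e1 e2 v = v3scale m U.
Proof.
move=> hD hl hl'; rewrite /on_line_chart !dot_side_line => /eqP h1 /eqP h2.
move: h1 h2; rewrite !mulf_eq0 (negbTE hl) (negbTE hl') => /eqP h1 /eqP h2.
exact: det3_eq0_scale hD h2 h1.
Qed.

Lemma side_point_coef (U W X : vec3 R) k y k' s s' : det3 U W X != 0 -> k' != 0 ->
  side_point k U W y = v3scale k' (v3add (v3scale s U) (v3scale s' W)) -> s * y = s'.
Proof.
move=> hD hk' E.
have e1 : k * det3 U W X = k' * s * det3 U W X.
  by transitivity (dot (cross W X) (side_point k U W y)); [|rewrite E]; vec3_ring.
have e2 : k * y * det3 U W X = k' * s' * det3 U W X.
  by transitivity (dot (cross X U) (side_point k U W y)); [|rewrite E]; vec3_ring.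
by apply: (mulfI hk'); rewrite mulrA -(mulIf hD e1) (mulIf hD e2).
Qed.

Lemma chart_side_param_gt0 o e1 e2 (U W X : vec3 R) k y (u w p : pt2 R) m m' :
  det3 U W X != 0 -> chart o e1 e2 u = v3scale m U -> chart o e1 e2 w = v3scale m' W ->
  0 < m * m' -> chart_coord o e1 e2 (side_point k U W y) p -> in_open_segment p u w ->
  0 < y.
Proof.
move=> hD eu ew hm [k' [hk' eP]] [t [t0 [t1 ep]]].
rewrite ep chart_convex eu ew !v3scaleA in eP.
exact: segment_param_gt0 t0 t1 hm (side_point_coef hD hk' eP).
Qed.

Lemma side_point_in_open_segment o e1 e2 (u w : pt2 R) k y : k != 0 -> 0 < y ->
  exists p, chart_coord o e1 e2 (side_point k (chart o e1 e2 u) (chart o e1 e2 w) y) p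
            /\ in_open_segment p u w.
Proof.
move=> hk hy; have hy1 : 0 < 1 + y by rewrite addr_gt0.
set t := y / (1 + y).
exists ((1 - t) * u.1 + t * w.1, (1 - t) * u.2 + t * w.2); split.
- exists (k * (1 + y)); split; first by rewrite mulf_neq0 // lt0r_neq0.
  rewrite chart_convex /t; move: (chart o e1 e2 u) (chart o e1 e2 w) => U W.
  by vec3_destruct; apply: vec3_eq; vec3_unfold; field; exact: lt0r_neq0.
- exists t; split; first exact: divr_gt0.
  by split => //; rewrite ltr_pdivrMr // mul1r ltrDr.
Qed.

Lemma frame_of_lines (a b c d : vec3 R) :
  det3 a b c <> 0 -> det3 a b d <> 0 -> det3 a c d <> 0 -> det3 b c d <> 0 ->
  exists V1 V2 V3 : vec3 R, exists la lb lc ld : R,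
  [/\ det3 V1 V2 V3 != 0, [/\ la != 0, lb != 0, lc != 0 & ld != 0] &
      [/\ a = side_line la V1 V2, b = side_line lb V2 V3,
          c = side_line lc V3 (parallelogram_vertex V1 V2 V3)
        & d = side_line ld (parallelogram_vertex V1 V2 V3) V1]].
Proof.
move=> /eqP hp habd hacd /eqP hq.
have hs : det3 d a b != 0 by rewrite -2!det3_cycle; exact/eqP.
have hr : det3 c d a != 0 by rewrite -det3_cycle; exact/eqP.
(* Lifts of d∩a, a∩b, b∩c, scaled so that V1 - V2 + V3 lifts c∩d. *)
exists (v3scale (det3 a b c * det3 b c d) (cross d a)),
  (v3scale (det3 b c d * det3 c d a) (cross a b)),
  (v3scale (det3 c d a * det3 d a b) (cross b c)).
rewrite parallelogram_vertex_cross.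
move: (det3 a b c) (det3 b c d) (det3 c d a) (det3 d a b) (cross_cross d a b)
  (cross_cross a b c) (cross_cross b c d) (cross_cross c d a) (det3_cross a b c d) hp hq hr hs
  => p q r s xa xb xc xd vol hp hq hr hs.
exists (p * q * (q * r) * s)^-1, (q * r * (r * s) * p)^-1, (r * s * (s * p) * q)^-1,
  (s * p * (p * q) * r)^-1.
split.
- by rewrite det3_scale vol !mulf_neq0.
- by split; rewrite invr_neq0 // !mulf_neq0.
- by split; apply: side_line_of_cross; rewrite ?mulf_neq0.
Qed.

Lemma side_point_of_flag (U W X P : vec3 R) l l' : l != 0 -> det3 U W X != 0 ->
  dot (side_line l U W) P = 0 -> dot (side_line l' W X) P <> 0 ->
  exists k y, k != 0 /\ P = side_point k U W y.
Proof.
rewrite !dot_side_line => hl hD /eqP; rewrite mulf_eq0 (negbTE hl) => /eqP hP hP'.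
by apply: side_point_of_det3 hD hP _; apply: contra_not_neq hP' => ->; rewrite mulr0.
Qed.

End Vec3.

Section Frame.
Variable R : realType.
Variables (V1 V2 V3 : vec3 R) (la lb lc ld kA kB kC kD y1 y2 y3 y4 : R).

Local Notation V4 := (parallelogram_vertex V1 V2 V3).
Local Notation vol := (det3 V1 V2 V3).
Local Notation A := (side_point kA V1 V2 y2).
Local Notation B := (side_point kB V2 V3 y3).
Local Notation C := (side_point kC V3 V4 y4).
Local Notation D := (side_point kD V4 V1 y1).
Local Notation a := (side_line la V1 V2).
Local Notation b := (side_line lb V2 V3).
Local Notation c := (side_line lc V3 V4).
Local Notation d := (side_line ld V4 V1).
Local Notation P := (1 + y4 + y3 * y4 + y2 * y3 * y4).
Local Notation Q := (1 + y2 + y1 * y2 + y1 * y2 * y4).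

(* Section variables cannot be destructed in place, so they are generalized first. *)
Ltac frame_ring :=
  move: (V1) (V2) (V3) => [[? ?] ?] [[? ?] ?] [[? ?] ?]; vec3_unfold; ring.
Ltac frame_eq_ring :=
  move: (V1) (V2) (V3) => [[? ?] ?] [[? ?] ?] [[? ?] ?]; apply: vec3_eq; vec3_unfold; ring.

Hypotheses (hvol : vol != 0) (hla : la != 0) (hlb : lb != 0) (hlc : lc != 0) (hld : ld != 0)
  (hkA : kA != 0) (hkB : kB != 0) (hkC : kC != 0) (hkD : kD != 0).

Lemma frame_dot_aA : dot a A = 0. Proof. frame_ring. Qed.
Lemma frame_dot_cC : dot c C = 0. Proof. frame_ring. Qed.
Lemma frame_dot_aB : dot a B = la * kB * y3 * vol. Proof. frame_ring. Qed.
Lemma frame_dot_aC : dot a C = la * kC * (1 + y4) * vol. Proof. frame_ring. Qed.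
Lemma frame_dot_aD : dot a D = la * kD * vol. Proof. frame_ring. Qed.
Lemma frame_dot_bA : dot b A = lb * kA * vol. Proof. frame_ring. Qed.
Lemma frame_dot_bC : dot b C = lb * kC * y4 * vol. Proof. frame_ring. Qed.
Lemma frame_dot_cA : dot c A = lc * kA * (1 + y2) * vol. Proof. frame_ring. Qed.
Lemma frame_dot_cB : dot c B = lc * kB * vol. Proof. frame_ring. Qed.
Lemma frame_dot_cD : dot c D = lc * kD * y1 * vol. Proof. frame_ring. Qed.
Lemma frame_dot_dA : dot d A = ld * kA * y2 * vol. Proof. frame_ring. Qed.
Lemma frame_dot_dC : dot d C = ld * kC * vol. Proof. frame_ring. Qed.
Lemma frame_det_ABC : det3 A B C = kA * kB * kC * vol * P. Proof. frame_ring. Qed.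
Lemma frame_det_ACD : det3 A C D = kA * kC * kD * vol * Q. Proof. frame_ring. Qed.

Lemma frame_triple_ratio_ABC : triple_ratio A a B b C c = y3 * y4 * (1 + y2) / (1 + y4).
Proof.
rewrite /triple_ratio frame_dot_aB frame_dot_bC frame_dot_cA frame_dot_aC frame_dot_bA
  frame_dot_cB.
apply: (divr_common_factor (k := la * lb * lc * kA * kB * kC * vol ^+ 3)); [ring | ring |].
by rewrite !mulf_neq0 // expf_neq0.
Qed.

Lemma frame_triple_ratio_ACD : triple_ratio A a C c D d = (1 + y4) * y1 * y2 / (1 + y2).
Proof.
rewrite /triple_ratio frame_dot_aC frame_dot_cD frame_dot_dA frame_dot_aD frame_dot_cA
  frame_dot_dC.
apply: (divr_common_factor (k := la * lc * ld * kA * kC * kD * vol ^+ 3)); [ring | ring |].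
by rewrite !mulf_neq0 // expf_neq0.
Qed.

Lemma frame_cross_ratio_A :
  cross_ratio_pencil A a (line_through A B) (line_through A C) (line_through A D) = y3 * Q / P.
Proof.
have hA : A <> v3zero R.
  move=> hA0; move/eqP: (mulf_neq0 (mulf_neq0 hlb hkA) hvol); apply.
  by rewrite -frame_dot_bA hA0 dot_v3zero.
rewrite cross_ratio_pencil_lines ?frame_dot_aA // frame_dot_aB frame_dot_aD frame_det_ACD
  frame_det_ABC.
apply: (divr_common_factor (k := la * kA * kB * kC * kD * vol ^+ 2)); [ring | ring |].
by rewrite !mulf_neq0 // expf_neq0.
Qed.

Lemma frame_cross_ratio_C :
  cross_ratio_pencil C c (line_through C D) (line_through C A) (line_through C B) = y1 * P / Q.
Proof.
have hC : C <> v3zero R.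
  move=> hC0; move/eqP: (mulf_neq0 (mulf_neq0 hld hkC) hvol); apply.
  by rewrite -frame_dot_dC hC0 dot_v3zero.
rewrite cross_ratio_pencil_lines ?frame_dot_cC // frame_dot_cD frame_dot_cB
  (det3_cycle C A B) (det3_cycle C D A) (det3_cycle D A C) frame_det_ACD frame_det_ABC.
apply: (divr_common_factor (k := lc * kA * kB * kC * kD * vol ^+ 2)); [ring | ring |].
by rewrite !mulf_neq0 // expf_neq0.
Qed.

Lemma chart_frame_scalars_pos o e1 e2 (v1 v2 v3 v4 : pt2 R) m1 m2 m3 m4 :
  det3 o e1 e2 != 0 ->
  chart o e1 e2 v1 = v3scale m1 V1 -> chart o e1 e2 v2 = v3scale m2 V2 ->
  chart o e1 e2 v3 = v3scale m3 V3 -> chart o e1 e2 v4 = v3scale m4 V4 ->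
  convex_quad v1 v2 v3 v4 -> [/\ 0 < m1 * m2, 0 < m2 * m3, 0 < m3 * m4 & 0 < m4 * m1].
Proof.
move=> hd ev1 ev2 ev3 ev4 /convex_quad_orient_pairs[c1 c2 c3 c4].
have [d234 d341 d412] := det3_frame_next V1 V2 V3.
have [d124 d231 d342 d413] := det3_frame_prev V1 V2 V3.
split.
- apply: (mulr_gt0_of_orient_pair (p := m3 * m4 * vol) hd c3).
    by rewrite (orient2_chart_scaled ev3 ev4 ev1) d341; ring.
  by rewrite (orient2_chart_scaled ev3 ev4 ev2) d342; ring.
- apply: (mulr_gt0_of_orient_pair (p := m4 * m1 * vol) hd c4).
    by rewrite (orient2_chart_scaled ev4 ev1 ev2) d412; ring.
  by rewrite (orient2_chart_scaled ev4 ev1 ev3) d413; ring.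
- apply: (mulr_gt0_of_orient_pair (p := m1 * m2 * vol) hd c1).
    by rewrite (orient2_chart_scaled ev1 ev2 ev3); ring.
  by rewrite (orient2_chart_scaled ev1 ev2 ev4) d124; ring.
- apply: (mulr_gt0_of_orient_pair (p := m2 * m3 * vol) hd c2).
    by rewrite (orient2_chart_scaled ev2 ev3 ev4) d234; ring.
  by rewrite (orient2_chart_scaled ev2 ev3 ev1) d231; ring.
Qed.

Lemma frame_inscribed_pos :
  inscribed A a B b C c D d -> [/\ 0 < y1, 0 < y2, 0 < y3 & 0 < y4].
Proof.
move=> [o [e1 [e2 [/eqP hd [v1 [v2 [v3 [v4 [[[h1d h1a] [h2a h2b] [h3b h3c] [h4c h4d] hcv]
  [pA [pB [pC [pD [[cA sA] [cB sB] [cC sC] [cD sD]]]]]]]]]]]]]]].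
have [h124 h231 h342 h413] :
    [/\ det3 V1 V2 V4 != 0, det3 V2 V3 V1 != 0, det3 V3 V4 V2 != 0 & det3 V4 V1 V3 != 0].
  by case: (det3_frame_prev V1 V2 V3) => -> -> -> ->.
have [m1 ev1] := chart_vertex_on_sides h124 hld hla h1d h1a.
have [m2 ev2] := chart_vertex_on_sides h231 hla hlb h2a h2b.
have [m3 ev3] := chart_vertex_on_sides h342 hlb hlc h3b h3c.
have [m4 ev4] := chart_vertex_on_sides h413 hlc hld h4c h4d.
have [m12 m23 m34 m41] := chart_frame_scalars_pos hd ev1 ev2 ev3 ev4 hcv.
split.
- exact: chart_side_param_gt0 h413 ev4 ev1 m41 cD sD.
- exact: chart_side_param_gt0 h124 ev1 ev2 m12 cA sA.
- exact: chart_side_param_gt0 h231 ev2 ev3 m23 cB sB.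
- exact: chart_side_param_gt0 h342 ev3 ev4 m34 cC sC.
Qed.

(* The chart in which V1 V2 V3 V4 is the unit square. *)
Lemma frame_pos_inscribed :
  [/\ 0 < y1, 0 < y2, 0 < y3 & 0 < y4] -> inscribed A a B b C c D d.
Proof.
move=> [h1 h2 h3 h4].
pose e1 := v3add V2 (v3scale (-1) V1); pose e2 := v3add V4 (v3scale (-1) V1).
have [ev1 ev2 ev3 ev4] : [/\ chart V1 e1 e2 (0, 0) = V1, chart V1 e1 e2 (1, 0) = V2,
    chart V1 e1 e2 (1, 1) = V3 & chart V1 e1 e2 (0, 1) = V4].
  by rewrite /e1 /e2; split; frame_eq_ring.
exists V1, e1, e2; split.
  by rewrite (_ : det3 V1 e1 e2 = vol); [exact/eqP | rewrite /e1 /e2; frame_ring].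
exists (0, 0), (1, 0), (1, 1), (0, 1); split.
  rewrite /on_line_chart ev1 ev2 ev3 ev4; split; try by split; frame_ring.
  by left; rewrite /orient2 /=; do !split; lra.
have [pA hA] := side_point_in_open_segment V1 e1 e2 (0, 0) (1, 0) hkA h2.
have [pB hB] := side_point_in_open_segment V1 e1 e2 (1, 0) (1, 1) hkB h3.
have [pC hC] := side_point_in_open_segment V1 e1 e2 (1, 1) (0, 1) hkC h4.
have [pD hD] := side_point_in_open_segment V1 e1 e2 (0, 1) (0, 0) hkD h1.
rewrite ev1 ev2 in hA; rewrite ev2 ev3 in hB; rewrite ev3 ev4 in hC; rewrite ev4 ev1 in hD.
by exists pA, pB, pC, pD.
Qed.

Lemma frame_inscribed_iff_ratios_pos :
  inscribed A a B b C c D d <->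
  [/\ 0 < triple_ratio A a B b C c, 0 < triple_ratio A a C c D d,
      0 < cross_ratio_pencil A a (line_through A B) (line_through A C) (line_through A D)
    & 0 < cross_ratio_pencil C c (line_through C D) (line_through C A) (line_through C B)].
Proof.
rewrite frame_triple_ratio_ABC frame_triple_ratio_ACD frame_cross_ratio_A frame_cross_ratio_C.
split; first by move=> /frame_inscribed_pos /quad_ratios_pos_iff.
by move=> /quad_ratios_pos_iff /frame_pos_inscribed.
Qed.

End Frame.

Unset Implicit Arguments.

Theorem mainTheorem2 (R : realType) (A a B b C c D d : vec3 R)
  (hA : is_flag A a) (hB : is_flag B b) (hC : is_flag C c) (hD : is_flag D d)
  (hgen : generic4 A a B b C c D d) :
  let X := triple_ratio A a B b C c in
  let Y := triple_ratio A a C c D d in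
  let Z := cross_ratio_pencil A a (line_through A B) (line_through A C) (line_through A D) in
  let W := cross_ratio_pencil C c (line_through C D) (line_through C A) (line_through C B) in
  inscribed A a B b C c D d <-> [/\ 0 < X, 0 < Y, 0 < Z & 0 < W].
Proof.
case: hA hB hC hD => [_ [_ aA]] [_ [_ bB]] [_ [_ cC]] [_ [_ dD]].
case: hgen => _ [[habc [habd [hacd hbcd]]]
  [_ [_ [aD [bA [_ [_ [_ [cB [_ [_ [_ dC]]]]]]]]]]]].
have [V1 [V2 [V3 [la [lb [lc [ld [hvol [hla hlb hlc hld] [ea eb ec ed]]]]]]]]] :=
  frame_of_lines habc habd hacd hbcd.
subst a b c d.
have [h234 h341 h412] : [/\ det3 V2 V3 (parallelogram_vertex V1 V2 V3) != 0,
    det3 V3 (parallelogram_vertex V1 V2 V3) V1 != 0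
  & det3 (parallelogram_vertex V1 V2 V3) V1 V2 != 0].
  by case: (det3_frame_next V1 V2 V3) => -> -> ->.
have [kA [y2 [hkA ->]]] := side_point_of_flag hla hvol aA bA.
have [kB [y3 [hkB ->]]] := side_point_of_flag hlb h234 bB cB.
have [kC [y4 [hkC ->]]] := side_point_of_flag hlc h341 cC dC.
have [kD [y1 [hkD ->]]] := side_point_of_flag hld h412 dD aD.
exact: frame_inscribed_iff_ratios_pos.
Qed.
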